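(* Let $V$ be a vertex operator superalgebra and $g$ an automorphism of $V$ of finite order. If $M$ is a simple $g\sigma$-twisted $V$-module, then $g\circ M\cong M$. In particular, every simple (untwisted) $V$-module $M$ satisfies $\sigma\circ M\cong M$.
   Context: A vertex operator superalgebra (VOSA) $V=V_{\bar0}\oplus V_{\bar1}$ has the following structure. - Vertex operators $Y(v,z)=\sum v(n)z^{-n-1}$, vacuum $\mathbf1$, and conformal vector $\omega$ with $Y(\omega,z)=\sum L(n)z^{-n-2}$. - The super Jacobi identity holds with sign $\epsilon_{u,v}=(-1)^{\tilde u\tilde v}$. - $V=\bigoplus_{n\in\frac12\mathbb Z}V_n$ by $L(0)$-weight, with $V_{\bar0}$ integral and $V_{\bar1}$ half-integral weights. Automorphisms fix $\mathbf1,\omega$ and satisfy $gY(v,z)g^{-1}=Y(gv,z)$. $\sigma$ is the parity automorphism ($(-1)^i$ on $V_{\bar i}$). For an automorphism $x$ of order $T$, with $T'$ the order of $x\sigma$ and $V^r=\{v:xv=e^{-2\pi ir/T}v\}$: an $x$-twisted module is a space $M$ with $Y_M(v,z)=\sum_{n\in r/T+\mathbb Z}v(n)z^{-n-1}$ for $v\in V^r$, which is truncated, has $Y_M(\mathbf1,z)=\mathrm{id}$, and satisfies $z_0^{-1}\delta(\frac{z_1-z_2}{z_0})Y_M(u,z_1)Y_M(v,z_2)-\epsilon_{u,v}z_0^{-1}\delta(\frac{z_2-z_1}{-z_0})Y_M(v,z_2)Y_M(u,z_1)=z_2^{-1}(\frac{z_1-z_0}{z_2})^{-r/T}\delta(\frac{z_1-z_0}{z_2})Y_M(Y(u,z_0)v,z_2)$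 for $u\in V^r$. It is moreover the direct sum of finite-dimensional $L(0)$-eigenspaces $M_\lambda$ with $M_{\lambda+n/T'}=0$ for $n\ll0$. For $k\in\mathrm{Aut}(V)$, $k\circ M$ is the $kxk^{-1}$-twisted module equal to $M$ as a space with $Y_{k\circ M}(v,z)=Y_M(k^{-1}v,z)$. *)

From HB Require Import structures.
From mathcomp Require Import all_boot all_algebra.
From mathcomp Require Import reals realfun trigo.
From mathcomp Require Import complex.

Set Implicit Arguments.
Unset Strict Implicit.
Unset Printing Implicit Defensive.

Import GRing.Theory Num.Theory.
Local Open Scope ring_scope.

Section VOSA.

Variable R : realType.
Local Notation C := R[i].

Definition e2pii (q : rat) : C :=
  Complex (cos (2 * pi * ratr q)) (sin (2 * pi * ratr q)).

Definition binC (a : C) (k : nat) : C :=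
  (\prod_(j < k) (a - (j : nat)%:R)) / (k`!)%:R.

Definition is_int (q : rat) : Prop := exists k : int, q = k%:~R.

Definition fin_dim (W : lmodType C) (P : W -> Prop) : Prop :=
  exists b : seq W, (forall x, x \in b -> P x) /\
    forall w, P w -> exists c : nat -> C, w = \sum_(i < size b) c i *: b`_i.

Definition linear_fun (W1 W2 : lmodType C) (f : W1 -> W2) : Prop :=
  forall (a : C) (x y : W1), f (a *: x + y) = a *: f x + f y.

Variable V : lmodType C.

(* Data of a vertex operator superalgebra on V:
   Y u n v = u(n) v  (so Y(u,z)v = \sum_n u(n)v z^{-n-1}), vacuum vac,
   conformal vector om, parity automorphism sig, central charge c. *)
Variables (Y : V -> int -> V -> V) (vac om : V) (sig : V -> V) (c : C).

Definition Lop (n : int) : V -> V := Y om (n + 1).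

Definition wtV (a : rat) (v : V) : Prop := Y om 1 v = ratr a *: v.

Definition par_hom (W : lmodType C) (s : W -> W) (p : bool) (v : W) : Prop :=
  s v = (-1) ^+ p *: v.

Definition is_vosa : Prop :=
  (forall n v, linear_fun (fun u => Y u n v)) /\
  (forall u n, linear_fun (Y u n)) /\
  (forall u v, exists N : int, forall n, N <= n -> Y u n v = 0) /\
  (* vacuum: Y(1,z) = id, Y(v,z)1 \in v + zV[[z]] *)
  (forall n v, Y vac n v = if n == -1 then v else 0) /\
  (forall u, Y u (-1) vac = u) /\
  (forall u (n : int), 0 <= n -> Y u n vac = 0) /\
  linear_fun sig /\
  (forall a v, wtV a v -> is_int a -> sig v = v) /\
  (forall a v, wtV a v -> is_int (a - 1 / 2) -> sig v = - v) /\
  (forall p q u v n, par_hom sig p u -> par_hom sig q v -> par_hom sig (p (+) q) (Y u n v)) /\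
  (* super Jacobi identity, in components (Borcherds identity) *)
  (forall (p q : bool) u v (m n l : int) w (N : nat),
     par_hom sig p u -> par_hom sig q v ->
     (forall i : nat, (N <= i)%N ->
        [/\ Y u (l + i%:Z) v = 0, Y v (n + i%:Z) w = 0 & Y u (m + i%:Z) w = 0]) ->
     \sum_(i < N) binC m%:~R i *: Y (Y u (l + (i : nat)%:Z) v) (m + n - (i : nat)%:Z) w
     = \sum_(i < N) ((-1) ^+ (i : nat) * binC l%:~R i) *:
          (Y u (m + l - (i : nat)%:Z) (Y v (n + (i : nat)%:Z) w)
           - ((-1) ^+ (p && q) * (-1) ^ l) *:
               Y v (n + l - (i : nat)%:Z) (Y u (m + (i : nat)%:Z) w))) /\
  (forall (m n : int) v,
     Lop m (Lop n v) - Lop n (Lop m v)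
     = (m - n)%:~R *: Lop (m + n) v
       + (if m + n == 0 then ((m ^+ 3 - m)%:~R / 12%:R) * c else 0) *: v) /\
  (* L(-1)-derivative property: Y(L(-1)u, z) = d/dz Y(u, z) *)
  (forall u n v, Y (Lop (-1) u) n v = - (n%:~R) *: Y u (n - 1) v) /\
  wtV 2 om /\
  (forall v, exists s : seq (rat * V),
       (forall x, x \in s -> is_int (2 * x.1) /\ wtV x.1 x.2) /\
       v = \sum_(x <- s) x.2) /\
  (forall a, fin_dim (wtV a)) /\
  (exists N : rat, forall a v, a < N -> wtV a v -> v = 0).

Definition is_aut (g ginv : V -> V) : Prop :=
  [/\ linear_fun g, cancel g ginv, cancel ginv g, g vac = vac /\ g om = om
    & forall u n v, g (Y u n v) = Y (g u) n (g v)].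

Definition is_order (W : Type) (x : W -> W) (T : nat) : Prop :=
  [/\ (0 < T)%N, (forall v, iter T x v = v)
    & forall k, (0 < k < T)%N -> exists v, iter k x v <> v].

Definition finite_order (W : Type) (x : W -> W) : Prop := exists T, is_order x T.

(* x-twisted V-module structure Ym on M:  Ym v n w = v(n) w  (n rational),
   so that Y_M(v,z) = \sum_n v(n) z^{-n-1} *)
Definition twisted_module (x : V -> V) (M : lmodType C) (Ym : V -> rat -> M -> M) : Prop :=
  (forall n w, linear_fun (fun v => Ym v n w)) /\
  (forall v n, linear_fun (Ym v n)) /\
  (forall (T r : nat) v, is_order x T -> (r < T)%N ->
     x v = e2pii (- (r%:Q / T%:Q)) *: v ->
     forall n, ~ is_int (n - r%:Q / T%:Q) -> forall w, Ym v n w = 0) /\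
  (forall v w, exists N : rat, forall n, N <= n -> Ym v n w = 0) /\
  (forall n w, Ym vac n w = if n == -1 then w else 0) /\
  (forall (T r : nat) (p q : bool) u v (m n : rat) (l : int) w (N : nat),
     is_order x T -> (r < T)%N -> x u = e2pii (- (r%:Q / T%:Q)) *: u ->
     is_int (m - r%:Q / T%:Q) ->
     par_hom sig p u -> par_hom sig q v ->
     (forall i : nat, (N <= i)%N ->
        [/\ Y u (l + i%:Z) v = 0, Ym v (n + i%:Q) w = 0 & Ym u (m + i%:Q) w = 0]) ->
     \sum_(i < N) binC (ratr m) i *: Ym (Y u (l + (i : nat)%:Z) v) (m + n - (i : nat)%:Q) w
     = \sum_(i < N) ((-1) ^+ (i : nat) * binC l%:~R i) *:
          (Ym u (m + l%:~R - (i : nat)%:Q) (Ym v (n + (i : nat)%:Q) w)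
           - ((-1) ^+ (p && q) * (-1) ^ l) *:
               Ym v (n + l%:~R - (i : nat)%:Q) (Ym u (m + (i : nat)%:Q) w))) /\
  (forall w, exists s : seq (C * M),
       (forall y, y \in s -> Ym om 1 y.2 = y.1 *: y.2) /\
       w = \sum_(y <- s) y.2) /\
  (forall lam : C, fin_dim (fun w => Ym om 1 w = lam *: w)) /\
  (forall T' : nat, is_order (fun v => x (sig v)) T' ->
     forall lam : C, exists N : int, forall n : int, n < N ->
       forall w, Ym om 1 w = (lam + n%:~R / T'%:R) *: w -> w = 0).

Definition submodule (M : lmodType C) (Ym : V -> rat -> M -> M) (P : M -> Prop) : Prop :=
  [/\ P 0, (forall a x y, P x -> P y -> P (a *: x + y))
    & forall v n w, P w -> P (Ym v n w)].

Definition simple_module (M : lmodType C) (Ym : V -> rat -> M -> M) : Prop :=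
  (exists w : M, w <> 0) /\
  forall P, submodule Ym P -> (forall w, P w -> w = 0) \/ (forall w, P w).

Definition mod_iso (M1 M2 : lmodType C) (Y1 : V -> rat -> M1 -> M1)
    (Y2 : V -> rat -> M2 -> M2) : Prop :=
  exists f : M1 -> M2, [/\ linear_fun f, bijective f
    & forall v n w, f (Y1 v n w) = Y2 v n (f w)].

Definition twist_by (kinv : V -> V) (M : lmodType C) (Ym : V -> rat -> M -> M) :
  V -> rat -> M -> M := fun v => Ym (kinv v).

End VOSA.

(* The isomorphism is e^{2 pi i L(0)}, built on the L(0)-eigenspaces of M.  Let x = g sigma and let u in V_a satisfy x u = e^{-2 pi i r/T} u.
   Then u(n) vanishes unless n is in r/T + Z, and u(n) shifts L(0)-eigenvalues by
   a - n - 1 (the Jacobi identity for omega and u, plus L(-1)-derivation).  So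
   conjugation by e^{2 pi i L(0)} multiplies u(n) by e^{2 pi i (a - n - 1)}
   = e^{2 pi i a} e^{-2 pi i r/T}, which is the eigenvalue of g = x sigma on u since
   sigma acts on V_a by e^{2 pi i a}.  Splitting an arbitrary vector of V into such
   components (with the averaging projections of the finite-order map x) gives
   e^{2 pi i L(0)} Y_M(g^-1 v, z) = Y_M(v, z) e^{2 pi i L(0)}.  The untwisted case is
   g = sigma, x = id. *)

From HB Require Import structures.
From mathcomp Require Import all_boot all_order all_algebra.
From mathcomp Require Import reals realfun trigo.
From mathcomp Require Import complex.
From mathcomp Require Import boolp.
From mathcomp Require Import sequences exp.
From mathcomp Require Import ring lra zify.
Import Order.TTheory GRing.Theory Num.Theory.
Local Open Scope ring_scope.

Set Implicit Arguments.
Unset Strict Implicit.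
Unset Printing Implicit Defensive.

Lemma natQ (i : nat) : i%:Q = i%:R.
Proof. by rewrite pmulrn. Qed.

Lemma half_int_cases (a : rat) : is_int (2 * a) -> is_int a \/ is_int (a - 1 / 2).
Proof.
move=> [k hk]; have ha : a = k%:~R / 2 by rewrite -hk; field.
have kE := divz_eq k 2; set d := (k %/ 2)%Z in kE; set r := (k %% 2)%Z in kE.
have [r0|r1] : r = 0 \/ r = 1.
  by have := @modz_ge0 k 2 isT; have := @ltz_pmod k 2 isT; rewrite -/r; lia.
- by left; exists d; rewrite ha kE r0 addr0 intrM; field.
- by right; exists d; rewrite ha kE r1 intrD intrM; field.
Qed.

Lemma rat_le_nat_eventually (q : rat) :
  exists N : nat, forall i : nat, (N <= i)%N -> q <= i%:R.
Proof.
exists (Num.bound `|q|) => i hi.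
apply: (le_trans (ler_norm q)); apply: (le_trans (ltW (archi_boundP (normr_ge0 q)))).
by rewrite ler_nat.
Qed.

Lemma sum_ord_shift (V : nmodType) (F : nat -> V) n : F n = F 0%N ->
  \sum_(k < n) F k.+1 = \sum_(k < n) F k.
Proof.
case: n => [|n] Fn; first by rewrite !big_ord0.
by rewrite big_ord_recr big_ord_recl /= addrC Fn.
Qed.

Section TwoPiI.
Variable R : realType.
Local Notation C := R[i].
Local Notation e := (e2pii R).

Lemma e2piiD (p q : rat) : e (p + q) = e p * e q.
Proof.
rewrite /e2pii rmorphD mulrDr cosD sinD.
by apply/eqP; rewrite eq_complex /= !eqxx /= addrC eqxx.
Qed.

Lemma e2pii0 : e 0 = 1.
Proof. by rewrite /e2pii rmorph0 mulr0 cos0 sin0. Qed.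

Lemma e2piiN (q : rat) : e (- q) * e q = 1.
Proof. by rewrite -e2piiD addNr e2pii0. Qed.

Lemma e2pii_natM (k : nat) (q : rat) : e (k%:R * q) = e q ^+ k.
Proof.
elim: k => [|k IH]; first by rewrite mul0r e2pii0 expr0.
by rewrite -natr1 mulrDl mul1r e2piiD IH exprSr.
Qed.

Lemma e2pii_int (k : int) : e k%:~R = 1.
Proof.
have e1 : e 1 = 1 by rewrite /e2pii rmorph1 mulr1 mulr_natl cos2pi sin2pi.
have en (n : nat) : e n%:R = 1 by rewrite -[n%:R]mulr1 e2pii_natM e1 expr1n.
case: k => n; first exact: en.
by rewrite NegzE mulrNz -[LHS]mulr1 -(en n.+1) e2piiN.
Qed.

Lemma e2pii_is_int (q : rat) : is_int q -> e q = 1.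
Proof. by case=> k ->; apply: e2pii_int. Qed.

Lemma e2pii_half : e (1 / 2) = -1.
Proof.
rewrite /e2pii mul1r fmorphV /= ratr_nat.
have -> : 2 * pi * (2%:R)^-1 = pi :> R.
  by rewrite mulrC mulrA mulVf ?mul1r // pnatr_eq0.
by rewrite cospi sinpi; apply/eqP; rewrite eq_complex /= oppr0 !eqxx.
Qed.

Lemma e2pii_half_intK (a : rat) : is_int (2 * a) -> e a * e a = 1.
Proof. by move=> h2; rewrite -e2piiD -mulr2n -mulr_natl; apply: e2pii_is_int. Qed.

(* on (0, 2 pi), sin vanishes only at pi, where cos is -1 *)
Lemma e2pii_neq1 (q : rat) : 0 < q < 1 -> e q != 1.
Proof.
move=> /andP[q0 q1]; rewrite /e2pii; apply/negP => /eqP[hcos].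
set x := 2 * pi * ratr q.
have hq : 0 < (ratr q : R) by rewrite ltr0q.
have hq1 : (ratr q : R) < 1 by rewrite -(rmorph1 (ratr : rat -> R)) ltr_rat.
have x0 : 0 < x by apply: mulr_gt0 => //; apply: mulr_gt0 => //; exact: pi_gt0.
have x1 : x < pi *+ 2.
  by rewrite /x mulr_natl gtr_pMr // mulrn_wgt0 // pi_gt0.
case: (ltgtP x pi) => xp.
- by move=> h; have := sin_gt0_pi (x:=x); rewrite x0 xp h ltxx => /(_ isT).
- move=> h; have : sin (x - pi + pi) = 0 by rewrite subrK.
  rewrite sinDpi => /eqP; rewrite oppr_eq0 => /eqP h2.
  have := sin_gt0_pi (x:=x - pi); rewrite h2 ltxx subr_gt0 xp /=.
  by rewrite ltrBlDr -mulr2n x1 => /(_ isT).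
- move=> _; move: hcos; rewrite -/x xp cospi => hcos.
  have : (2 : R) == 0 by rewrite -[2]/(1 + 1) -{1}hcos addNr.
  by rewrite pnatr_eq0.
Qed.

Definition expi2pi (z : C) : C :=
  Complex (expR (- (2 * pi * complex.Im z)) * cos (2 * pi * complex.Re z))
          (expR (- (2 * pi * complex.Im z)) * sin (2 * pi * complex.Re z)).

Lemma expi2piD z1 z2 : expi2pi (z1 + z2) = expi2pi z1 * expi2pi z2.
Proof.
case: z1 => a b; case: z2 => c d; rewrite /expi2pi /=.
rewrite !mulrDr opprD expRD cosD sinD.
by apply/eqP; rewrite eq_complex /=; apply/andP; split; apply/eqP; ring.
Qed.

Lemma expi2piN z : expi2pi (- z) * expi2pi z = 1.
Proof.
rewrite -expi2piD addNr /expi2pi /= !mulr0 oppr0 expR0 cos0 sin0.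
by rewrite mulr1 mulr0.
Qed.

Lemma expi2pi_rat (q : rat) : expi2pi (ratr q) = e q.
Proof.
rewrite -(fmorph_rat (real_complex R)) /expi2pi /= mulr0 oppr0 expR0.
by rewrite !mul1r.
Qed.
End TwoPiI.

Section LinearFun.
Variables (R : realType) (W1 W2 : lmodType R[i]) (f : W1 -> W2).
Hypothesis f_lin : linear_fun f.

Lemma linfunD x y : f (x + y) = f x + f y.
Proof. by rewrite -{1}[x]scale1r f_lin scale1r. Qed.

Lemma linfun0 : f 0 = 0.
Proof. by apply: (addrI (f 0)); rewrite -linfunD !addr0. Qed.

Lemma linfunZ a x : f (a *: x) = a *: f x.
Proof. by rewrite -[a *: x]addr0 f_lin linfun0 addr0. Qed.

Lemma linfunN x : f (- x) = - f x.
Proof. by rewrite -scaleN1r linfunZ scaleN1r. Qed.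

Lemma linfun_sum I (r : seq I) (P : pred I) (F : I -> W1) :
  f (\sum_(i <- r | P i) F i) = \sum_(i <- r | P i) f (F i).
Proof. exact: (big_morph f linfunD linfun0). Qed.

Lemma linfun_can (f' : W2 -> W1) : cancel f f' -> cancel f' f -> linear_fun f'.
Proof. by move=> fK f'K a x y; apply: (can_inj fK); rewrite f_lin !f'K. Qed.
End LinearFun.

Section EigenFunctionalCalculus.
Variables (R : realType) (M : lmodType R[i]) (L : M -> M).
Hypothesis L_lin : linear_fun L.
Local Notation C := R[i].

Definition eigen_decomp (w : M) (s : seq (C * M)) :=
  (forall y, y \in s -> L y.2 = y.1 *: y.2) /\ w = \sum_(y <- s) y.2.

Lemma eigen_sum_eq0_weighted (s : seq (C * M)) :
  (forall y, y \in s -> L y.2 = y.1 *: y.2) -> \sum_(y <- s) y.2 = 0 ->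
  forall h : C -> C, \sum_(y <- s) h y.1 *: y.2 = 0.
Proof.
elim: {s}(size s) {-2}s (leqnn (size s)) => [|n IH] [|[l0 v0] s] //=;
  try by move=> *; rewrite big_nil.
rewrite ltnS => s_le hs; rewrite big_cons /= => /eqP; rewrite addr_eq0 => /eqP v0E h.
have hs' y : y \in s -> L y.2 = y.1 *: y.2.
  by move=> ys; apply: hs; rewrite inE ys orbT.
have Lv0 : L v0 = l0 *: v0 by apply: (hs (l0, v0)); rewrite inE eqxx.
(* applying L - l0 kills v0 and leaves a shorter vanishing sum of eigenvectors *)
pose t := [seq (y.1, (y.1 - l0) *: y.2) | y <- s].
have ht y : y \in t -> L y.2 = y.1 *: y.2.
  by move=> /mapP[z zs ->] /=; rewrite linfunZ // hs' // !scalerA mulrC.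
have t_sum0 : \sum_(y <- t) y.2 = 0.
  rewrite big_map /=; under eq_bigr => y _ do rewrite scalerBl.
  rewrite sumrB -scaler_sumr.
  have -> : \sum_(y <- s) y.1 *: y.2 = L (\sum_(y <- s) y.2).
    by rewrite linfun_sum //; apply: eq_big_seq => y /hs' ->.
  have -> : \sum_(y <- s) y.2 = - v0 by rewrite v0E opprK.
  by rewrite linfunN // Lv0 scalerN subrr.
have := IH t _ ht t_sum0 (fun l => if l == l0 then 0 else (h l - h l0) / (l - l0)).
rewrite size_map big_map /= => /(_ s_le) H.
rewrite big_cons /= v0E scalerN scaler_sumr addrC -sumrB -[RHS]H.
apply: eq_bigr => y _; rewrite -scalerBl scalerA.
case: eqP => [->|/eqP ne]; first by rewrite subrr mul0r scale0r.
by rewrite mulfVK // subr_eq0.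
Qed.

(* h(L), defined through any eigenvector decomposition (0 if there is none) *)
Definition eigfun (h : C -> C) (w : M) : M :=
  match pselect (exists s, eigen_decomp w s) with
  | left H => \sum_(y <- projT1 (cid H)) h y.1 *: y.2
  | right _ => 0
  end.

Lemma eigfunE h w s : eigen_decomp w s -> eigfun h w = \sum_(y <- s) h y.1 *: y.2.
Proof.
move=> [hs hw]; rewrite /eigfun; case: pselect => [H|[]]; last by exists s.
case: (cid H) => s0 [hs0 hw0] /=.
pose u := s0 ++ [seq (y.1, - y.2) | y <- s].
have hu y : y \in u -> L y.2 = y.1 *: y.2.
  rewrite mem_cat => /orP[/hs0 //|/mapP[z zs ->] /=].
  by rewrite linfunN // hs // scalerN.
have u_sum0 : \sum_(y <- u) y.2 = 0.
  by rewrite big_cat big_map /= sumrN -hw0 -hw subrr.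
have := eigen_sum_eq0_weighted hu u_sum0 h.
rewrite big_cat big_map /=; under [X in _ + X = _]eq_bigr do rewrite scalerN.
by rewrite sumrN => /eqP; rewrite subr_eq0 => /eqP.
Qed.

Lemma eigfun_eigvec h l w : L w = l *: w -> eigfun h w = h l *: w.
Proof.
move=> Lw; rewrite (@eigfunE h _ [:: (l, w)]) ?big_seq1 //.
by split=> [y|]; rewrite ?big_seq1 // inE => /eqP ->.
Qed.

Hypothesis L_diag : forall w, exists s, eigen_decomp w s.

Lemma eigfun_lin h : linear_fun (eigfun h).
Proof.
move=> a x y; have [sx [hx1 hx2]] := L_diag x; have [sy [hy1 hy2]] := L_diag y.
rewrite (@eigfunE h x sx) // (@eigfunE h y sy) //.
rewrite (@eigfunE h _ ([seq (z.1, a *: z.2) | z <- sx] ++ sy)).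
  rewrite big_cat big_map /= scaler_sumr; congr (_ + _).
  by apply: eq_bigr => z _; rewrite !scalerA mulrC.
split; last by rewrite big_cat big_map /= hx2 hy2 scaler_sumr.
move=> z; rewrite mem_cat => /orP[/mapP[u us ->] /=|/hy1 //].
by rewrite linfunZ // hx1 // !scalerA mulrC.
Qed.

Lemma eigfunK h h' : (forall l, h' l * h l = 1) -> cancel (eigfun h) (eigfun h').
Proof.
move=> hh w; have [s [hs hw]] := L_diag w.
rewrite (@eigfunE h _ s) //.
rewrite (@eigfunE h' _ [seq (y.1, h y.1 *: y.2) | y <- s]).
  by rewrite big_map /= hw; apply: eq_bigr => y _; rewrite scalerA hh scale1r.
split; last by rewrite big_map.
by move=> z /mapP[u us ->] /=; rewrite linfunZ // hs // !scalerA mulrC.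
Qed.
End EigenFunctionalCalculus.

Section FiniteOrderEigenspaces.
Variables (R : realType) (W : lmodType R[i]) (x : W -> W) (T : nat).
Hypotheses (x_lin : linear_fun x) (T_gt0 : (0 < T)%N)
  (xT : forall v, iter T x v = v).
Local Notation e := (e2pii R).
Local Notation zeta r := (e (r%:Q / T%:Q)).

Definition eigproj (r : nat) (u : W) : W :=
  (T%:R)^-1 *: \sum_(k < T) zeta r ^+ k *: iter k x u.

Lemma zetaX_T r : zeta r ^+ T = 1.
Proof.
by rewrite -e2pii_natM -natQ mulrC mulfVK ?e2pii_int // natQ pnatr_eq0 -lt0n.
Qed.

Lemma eigprojP r u : x (eigproj r u) = e (- (r%:Q / T%:Q)) *: eigproj r u.
Proof.
rewrite /eigproj linfunZ // linfun_sum // scalerA [e _ * _]mulrC -scalerA.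
congr (_ *: _).
set f := fun k : nat => zeta r ^+ k *: iter k x u.
have -> : \sum_(k < T) x (zeta r ^+ k *: iter k x u) =
          e (- (r%:Q / T%:Q)) *: \sum_(k < T) f k.+1.
  rewrite scaler_sumr; apply: eq_bigr => k _.
  by rewrite linfunZ // -iterS /f scalerA exprS mulrA e2piiN mul1r.
by congr (_ *: _); apply: sum_ord_shift; rewrite /f zetaX_T xT expr0.
Qed.

Lemma sum_zetaX (k : nat) : (k < T)%N ->
  \sum_(r < T) zeta r ^+ k = if k == 0%N then T%:R else 0.
Proof.
move=> kT; case: eqP => [->|/eqP k0].
  by rewrite (eq_bigr (fun _ => 1)) ?sumr_const ?card_ord // => r _; rewrite expr0.
set z := e (k%:Q / T%:Q).
have zetaE (r : nat) : zeta r ^+ k = z ^+ r.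
  by rewrite -!e2pii_natM -!natQ !mulrA [_ * r%:Q]mulrC.
under eq_bigr do rewrite zetaE.
have zT : z ^+ T = 1 by apply: zetaX_T.
have z1 : z != 1.
  apply: e2pii_neq1; rewrite !natQ divr_gt0 ?ltr0n ?T_gt0 ?lt0n //=.
  by rewrite ltr_pdivrMr ?ltr0n // mul1r ltr_nat.
have := subrX1 z T; rewrite zT subrr => /esym/eqP.
by rewrite mulf_eq0 subr_eq0 (negbTE z1) => /eqP.
Qed.

Lemma sum_eigproj u : \sum_(r < T) eigproj r u = u.
Proof.
rewrite /eigproj -scaler_sumr exchange_big /=.
under eq_bigr do rewrite -scaler_suml sum_zetaX ?ltn_ord //.
rewrite (bigD1 (Ordinal T_gt0)) //= big1 ?addr0; last first.
  by move=> i /negbTE; rewrite -val_eqE /= => ->; rewrite scale0r.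
by rewrite scalerA mulVf ?pnatr_eq0 -?lt0n // scale1r.
Qed.

Lemma eigproj_closed (Q : W -> Prop) :
  Q 0 -> (forall k v, Q v -> Q (k *: v)) ->
  (forall v w, Q v -> Q w -> Q (v + w)) -> (forall v, Q v -> Q (x v)) ->
  forall r u, Q u -> Q (eigproj r u).
Proof.
move=> Q0 QZ QD Qx r u Qu; apply: (QZ).
have Qit k : Q (iter k x u) by elim: k => [//|k IH]; rewrite iterS; apply: Qx.
by elim/big_ind: _ => // k _; apply: (QZ).
Qed.
End FiniteOrderEigenspaces.

Lemma order_exists (W : Type) (f : W -> W) N : (0 < N)%N ->
  (forall v, iter N f v = v) -> exists T, is_order f T.
Proof.
move=> N0 fN.
have hex : exists k, (0 < k)%N && `[< forall v, iter k f v = v >].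
  by exists N; rewrite N0 /=; apply/asboolP.
case: (ex_minnP hex) => T /andP[T0 /asboolP fT] Tmin.
exists T; split => // k /andP[k0 kT]; apply/existsNP => fk.
have := Tmin k; rewrite k0 /=.
have -> : `[< forall v, iter k f v = v >] by apply/asboolP.
by move=> /(_ isT); rewrite leqNgt kT.
Qed.

Lemma iter_double_involutive (W : Type) (f : W -> W) n :
  involutive f -> forall v, iter n.*2 f v = v.
Proof. by move=> fK v; elim: n => [//|n IH]; rewrite doubleS !iterS IH fK. Qed.

Section VertexOperatorSuperalgebra.
Variables (R : realType) (V : lmodType R[i]).
Variables (Y : V -> int -> V -> V) (vac om : V) (sig : V -> V) (c : R[i]).
Hypothesis hV : is_vosa Y vac om sig c.
Local Notation wt := (wtV Y om).
Local Notation e := (e2pii R).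

Lemma mode_lin u n : linear_fun (Y u n).
Proof. by move: hV; do 1![case=> _]; case=> h _; apply: h. Qed.

Lemma mode_trunc u v : exists N : int, forall n, N <= n -> Y u n v = 0.
Proof. by move: hV; do 2![case=> _]; case=> h _; apply: h. Qed.

Lemma vac_creation u : Y u (-1) vac = u.
Proof. by move: hV; do 4![case=> _]; case=> h _; apply: h. Qed.

Lemma mode_vac_ge0 u (n : int) : 0 <= n -> Y u n vac = 0.
Proof. by move: hV; do 5![case=> _]; case=> h _; apply: h. Qed.

Lemma sig_lin : linear_fun sig.
Proof. by move: hV; do 6![case=> _]; case=> h _; apply: h. Qed.

Lemma sig_wt_int a v : wt a v -> is_int a -> sig v = v.
Proof. by move: hV; do 7![case=> _]; case=> h _; apply: h. Qed.

Lemma sig_wt_half a v : wt a v -> is_int (a - 1 / 2) -> sig v = - v.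
Proof. by move: hV; do 8![case=> _]; case=> h _; apply: h. Qed.

Lemma mode_Lm1 u n v : Y (Lop Y om (-1) u) n v = - (n%:~R) *: Y u (n - 1) v.
Proof. by move: hV; do 12![case=> _]; case=> h _; apply: h. Qed.

Lemma wt_om : wt 2 om.
Proof. by move: hV; do 13![case=> _]; case=> h _; apply: h. Qed.

Lemma wt_decomp v : exists s : seq (rat * V),
  (forall y, y \in s -> is_int (2 * y.1) /\ wt y.1 y.2) /\ v = \sum_(y <- s) y.2.
Proof. by move: hV; do 14![case=> _]; case=> h _; apply: h. Qed.

Lemma wtV_lin a k v w : wt a v -> wt a w -> wt a (k *: v + w).
Proof. by rewrite /wtV => hv hw; rewrite mode_lin hv hw scalerDr !scalerA mulrC. Qed.

Lemma wtV0 a : wt a 0.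
Proof. by rewrite /wtV (linfun0 (mode_lin _ _)) scaler0. Qed.

Lemma wtVZ a k v : wt a v -> wt a (k *: v).
Proof. by move=> hv; rewrite -[k *: v]addr0; apply: wtV_lin => //; apply: wtV0. Qed.

Lemma wtVD a v w : wt a v -> wt a w -> wt a (v + w).
Proof. by move=> hv hw; rewrite -[v]scale1r; apply: wtV_lin. Qed.

Lemma sig_wtV a v : wt a v -> is_int (2 * a) -> sig v = e a *: v.
Proof.
move=> hv /half_int_cases[ha|ha].
  by rewrite e2pii_is_int // scale1r (sig_wt_int hv).
rewrite (sig_wt_half hv ha) -[a](subrK (1 / 2)) e2piiD e2pii_half.
by rewrite e2pii_is_int // mul1r scaleN1r.
Qed.

Lemma wtV_par_hom a v : wt a v -> is_int (2 * a) -> exists p, par_hom sig p v.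
Proof.
move=> hv /half_int_cases[ha|ha].
  by exists false; rewrite /par_hom scale1r (sig_wt_int hv).
by exists true; rewrite /par_hom scaleN1r (sig_wt_half hv ha).
Qed.

Lemma sig_preserves_wtV a v : wt a v -> is_int (2 * a) -> wt a (sig v).
Proof. by move=> hv h2; rewrite (sig_wtV hv h2); apply: wtVZ. Qed.

Lemma sig_om : sig om = om.
Proof. by apply: (sig_wt_int wt_om); exists 2. Qed.

Lemma sig_vac : sig vac = vac.
Proof.
apply: (@sig_wt_int 0); last by exists 0.
by rewrite /wtV mode_vac_ge0 // rmorph0 scale0r.
Qed.

Lemma sigK : involutive sig.
Proof.
move=> v; have [s [hs ->]] := wt_decomp v.
rewrite !(linfun_sum sig_lin); apply: eq_big_seq => y /hs[h2 hy].
rewrite (sig_wtV hy h2) (linfunZ sig_lin) (sig_wtV hy h2) scalerA.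
by rewrite e2pii_half_intK // scale1r.
Qed.

Section Automorphism.
Variable g : V -> V.
Hypotheses (g_lin : linear_fun g) (g_om : g om = om)
  (g_mode : forall u n v, g (Y u n v) = Y (g u) n (g v)).

Lemma aut_preserves_wtV a v : wt a v -> wt a (g v).
Proof. by rewrite /wtV => hv; rewrite -g_om -g_mode hv (linfunZ g_lin). Qed.

Lemma aut_sig v : g (sig v) = sig (g v).
Proof.
have [s [hs ->]] := wt_decomp v.
rewrite (linfun_sum sig_lin) !(linfun_sum g_lin) (linfun_sum sig_lin).
apply: eq_big_seq => y /hs[h2 hy].
by rewrite (sig_wtV hy h2) (linfunZ g_lin) (sig_wtV (aut_preserves_wtV hy) h2).
Qed.

Lemma iter_aut_sig n v : iter n (g \o sig) v = iter n g (iter n sig v).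
Proof.
have iter_sig_g m w : iter m sig (g w) = g (iter m sig w).
  by elim: m => [//|m IH]; rewrite !iterS IH aut_sig.
elim: n v => [//|n IH] v.
by rewrite iterSr IH /= iter_sig_g -!iterSr.
Qed.
End Automorphism.
End VertexOperatorSuperalgebra.

Section Binomial.
Variable R : realType.
Local Notation C := R[i].

Lemma binC0 (a : C) : binC a 0 = 1.
Proof. by rewrite /binC big_ord0 divr1. Qed.

Lemma binC1 (a : C) : binC a 1 = a.
Proof. by rewrite /binC big_ord1 subr0 divr1. Qed.

Lemma binC0S i : binC (0 : C) i.+1 = 0.
Proof. by rewrite /binC big_ord_recl /= subrr mul0r mul0r. Qed.

Lemma binC1SS i : binC (1 : C) i.+2 = 0.
Proof. by rewrite /binC big_ord_recl big_ord_recl /= subrr mul0r mulr0 mul0r. Qed.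
End Binomial.

Section TwistedModule.
Variables (R : realType) (V : lmodType R[i]).
Variables (Y : V -> int -> V -> V) (vac om : V) (sig : V -> V) (c : R[i]).
Hypothesis hV : is_vosa Y vac om sig c.
Variables (M : lmodType R[i]) (Ym : V -> rat -> M -> M) (x : V -> V) (T : nat).
Hypotheses (hM : twisted_module Y vac om sig x Ym) (hT : is_order x T)
  (x_om : x om = om).
Local Notation e := (e2pii R).
Local Notation L0 := (Ym om 1).

Lemma tw_lin_vertex n w : linear_fun (fun v => Ym v n w).
Proof. by case: hM => h _; apply: h. Qed.

Lemma tw_lin v n : linear_fun (Ym v n).
Proof. by move: hM; do 1![case=> _]; case=> h _; apply: h. Qed.

Lemma tw_modes r v : (r < T)%N -> x v = e (- (r%:Q / T%:Q)) *: v ->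
  forall n, ~ is_int (n - r%:Q / T%:Q) -> forall w, Ym v n w = 0.
Proof. by move: hM; do 2![case=> _]; case=> h _; apply: h. Qed.

Lemma tw_trunc v w : exists N : rat, forall n, N <= n -> Ym v n w = 0.
Proof. by move: hM; do 3![case=> _]; case=> h _; apply: h. Qed.

Lemma tw_vac n w : Ym vac n w = if n == -1 then w else 0.
Proof. by move: hM; do 4![case=> _]; case=> h _; apply: h. Qed.

Lemma tw_jacobi (r : nat) (p q : bool) u v (m n : rat) (l : int) w (N : nat) :
  (r < T)%N -> x u = e (- (r%:Q / T%:Q)) *: u -> is_int (m - r%:Q / T%:Q) ->
  par_hom sig p u -> par_hom sig q v ->
  (forall i : nat, (N <= i)%N ->
     [/\ Y u (l + i%:Z) v = 0, Ym v (n + i%:Q) w = 0 & Ym u (m + i%:Q) w = 0]) ->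
  \sum_(i < N) binC (ratr m) i *: Ym (Y u (l + (i : nat)%:Z) v) (m + n - (i : nat)%:Q) w
  = \sum_(i < N) ((-1) ^+ (i : nat) * binC l%:~R i) *:
       (Ym u (m + l%:~R - (i : nat)%:Q) (Ym v (n + (i : nat)%:Q) w)
        - ((-1) ^+ (p && q) * (-1) ^ l) *:
            Ym v (n + l%:~R - (i : nat)%:Q) (Ym u (m + (i : nat)%:Q) w)).
Proof. by move: hM; do 5![case=> _]; case=> h _; apply: h. Qed.

Lemma tw_L0_decomp w : exists s : seq (R[i] * M), eigen_decomp L0 w s.
Proof. by move: hM; do 6![case=> _]; case=> h _; apply: h. Qed.

Lemma tw_trunc_shift v w m :
  exists N : nat, forall i : nat, (N <= i)%N -> Ym v (m + i%:Q) w = 0.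
Proof.
have [N hN] := tw_trunc v w; have [K hK] := rat_le_nat_eventually (N - m).
by exists K => i /hK Ki; apply: hN; rewrite natQ -lerBlDl.
Qed.

Lemma mode_trunc_shift u v (l : int) :
  exists N : nat, forall i : nat, (N <= i)%N -> Y u (l + i%:Z) v = 0.
Proof.
have [N hN] := mode_trunc hV u v.
by exists `|N - l|%N => i Ni; apply: hN; lia.
Qed.

Lemma tw_vac_modes_nonneg (i : nat) w : Ym vac i%:Q w = 0.
Proof.
rewrite tw_vac natQ ifF //; apply/negbTE/eqP => iN1.
by have := ler0n rat i; rewrite iN1; lra.
Qed.

Lemma tw_vac_modes_le2 (i : nat) w : Ym vac ((-2)%:~R - i%:Q) w = 0.
Proof.
rewrite tw_vac natQ ifF //; apply/negbTE/eqP => iN1.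
by have := ler0n rat i; move: iN1; lra.
Qed.

(* the Jacobi identity for (u, 1) with l = -2 *)
Lemma tw_mode_Lm1 (r : nat) u m w p : (r < T)%N ->
  x u = e (- (r%:Q / T%:Q)) *: u -> is_int (m - r%:Q / T%:Q) -> par_hom sig p u ->
  Ym (Lop Y om (-1) u) m w = - ratr m *: Ym u (m - 1) w.
Proof.
move=> rT xu hm hp.
have [K hK] := tw_trunc_shift u w m.
have hpvac : par_hom sig false vac by rewrite /par_hom (sig_vac hV) scale1r.
have trunc (i : nat) : (K.+2 <= i)%N ->
    [/\ Y u (-2 + i%:Z) vac = 0, Ym vac (0 + i%:Q) w = 0 & Ym u (m + i%:Q) w = 0].
  move=> Ki; split; first by apply: (mode_vac_ge0 hV); lia.
    by rewrite add0r tw_vac_modes_nonneg.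
  by apply: hK; apply: leq_trans Ki; rewrite ltnW.
have := tw_jacobi rT xu hm hp hpvac trunc.
rewrite [in X in _ = X -> _]big1 => [|i _]; last first.
  by rewrite !add0r tw_vac_modes_nonneg (linfun0 (tw_lin u _)) tw_vac_modes_le2
    scaler0 subr0 scaler0.
rewrite big_ord_recl big_ord_recl big1 => [|i _]; last first.
  by rewrite (mode_vac_ge0 hV) ?(linfun0 (tw_lin_vertex _ _)) ?scaler0.
rewrite /= !natQ binC0 binC1 !addr0 scale1r.
have -> : bump 0 0 = 1%N by [].
have -> : (-2 + 1%:Z = -1)%R by [].
have -> : Y u (-2 + 0%:Z) vac = Lop Y om (-1) u.
  have := mode_Lm1 hV u (-1) vac.
  by rewrite (vac_creation hV) mulrN1z opprK scale1r => ->.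
by rewrite (vac_creation hV) => /eqP; rewrite addr_eq0 => /eqP ->; rewrite scaleNr.
Qed.

(* the Jacobi identity for (omega, u) with m = 1, l = 0 *)
Lemma tw_L0_mode (r : nat) a u n w lam : (r < T)%N ->
  x u = e (- (r%:Q / T%:Q)) *: u -> is_int (n - r%:Q / T%:Q) ->
  wtV Y om a u -> is_int (2 * a) -> L0 w = lam *: w ->
  L0 (Ym u n w) = (lam + ratr (a - n - 1)) *: Ym u n w.
Proof.
move=> rT xu hn hu h2 hw.
have [p hp] := wtV_par_hom hV hu h2.
have [K0 hK0] := mode_trunc_shift om u 0.
have [K1 hK1] := tw_trunc_shift u w n.
have [K2 hK2] := tw_trunc_shift om w 1.
set K := maxn K0 (maxn K1 K2).
have x_om0 : x om = e (- (0%:Q / T%:Q)) *: om by rewrite mul0r oppr0 e2pii0 scale1r.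
have om_modes : is_int (1 - 0%:Q / T%:Q) by exists 1; rewrite mul0r subr0.
have hpom : par_hom sig false om by rewrite /par_hom scale1r (sig_om hV).
have trunc (i : nat) : (K.+2 <= i)%N ->
    [/\ Y om (0 + i%:Z) u = 0, Ym u (n + i%:Q) w = 0 & Ym om (1 + i%:Q) w = 0].
  move=> /ltnW/ltnW; rewrite !geq_max => /and3P[? ? ?].
  by split; [apply: hK0 | apply: hK1 | apply: hK2].
have T_gt0 : (0 < T)%N by case: hT.
have := tw_jacobi T_gt0 x_om0 om_modes hpom hp trunc.
rewrite [in X in _ = X -> _]big_ord_recl [in X in _ = X -> _]big1 => [|i _]; last first.
  by rewrite /= mulr0z binC0S mulr0 scale0r.
rewrite big_ord_recl big_ord_recl big1 => [|i _]; last by rewrite rmorph1 binC1SS scale0r.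
rewrite /= !natQ !mulr0z !binC0 binC1 rmorph1 !expr0 mul1r !scale1r.
rewrite ?addr0 ?subr0 ?add0r ?mulr1.
have -> : bump 0 0 = 1%N by [].
have hn1 : is_int (1 + n - r%:Q / T%:Q).
  by case: hn => k hk; exists (1 + k); rewrite -addrA hk intrD.
rewrite -[Y om 0 u]/(Lop Y om (-1) u) (tw_mode_Lm1 w rT xu hn1 hp).
have -> : 1 + n - 1 = n by ring.
rewrite hw (linfunZ (tw_lin u n)) hu (linfunZ (tw_lin_vertex n w)) => E.
rewrite -[L0 _](subrK (lam *: Ym u n w)) -E -!scalerDl; congr (_ *: _).
by rewrite !rmorphB rmorphD rmorph1; ring.
Qed.
End TwistedModule.

Section ExpL0Isomorphism.
Variables (R : realType) (V : lmodType R[i]).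
Variables (Y : V -> int -> V -> V) (vac om : V) (sig : V -> V) (c : R[i]).
Hypothesis hV : is_vosa Y vac om sig c.
Variables (g ginv : V -> V).
Hypotheses (g_lin : linear_fun g) (gK : cancel g ginv) (ginvK : cancel ginv g)
  (g_om : g om = om)
  (g_wt : forall a v, wtV Y om a v -> is_int (2 * a) -> wtV Y om a (g v)).
Variables (M : lmodType R[i]) (Ym : V -> rat -> M -> M) (x : V -> V) (T : nat).
Hypotheses (x_def : forall v, x v = g (sig v))
  (hM : twisted_module Y vac om sig x Ym) (hT : is_order x T).
Local Notation e := (e2pii R).
Local Notation L0 := (Ym om 1).
Local Notation expL0 := (eigfun L0 (@expi2pi R)).

Let x_om : x om = om.
Proof. by rewrite x_def (sig_om hV) g_om. Qed.

Let x_lin : linear_fun x.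
Proof. by move=> k u v; rewrite !x_def (sig_lin hV) g_lin. Qed.

Lemma expL0_lin : linear_fun expL0.
Proof. exact: (eigfun_lin (tw_lin hM om 1) (tw_L0_decomp hM)). Qed.

Lemma ginv_homog a u (q : rat) : wtV Y om a u -> is_int (2 * a) ->
  x u = e (- q) *: u -> ginv u = (e a * e q) *: u.
Proof.
move=> hu h2 xu.
have gu : g u = (e a * e (- q)) *: u.
  by rewrite -scalerA -xu x_def (sig_wtV hV hu h2) (linfunZ g_lin) scalerA
    e2pii_half_intK // scale1r.
apply: (can_inj gK); rewrite ginvK (linfunZ g_lin) gu scalerA mulrACA.
by rewrite e2pii_half_intK // mul1r mulrC e2piiN scale1r.
Qed.

(* conjugation by e^{2 pi i L(0)} scales u(n) by e^{2 pi i (a - n - 1)}, which for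
   n in r/T + Z is the eigenvalue of g = x sigma on u *)
Lemma expL0_conj_homog a u (r : nat) n w lam : (r < T)%N ->
  wtV Y om a u -> is_int (2 * a) -> x u = e (- (r%:Q / T%:Q)) *: u ->
  L0 w = lam *: w -> expL0 (Ym (ginv u) n w) = Ym u n (expL0 w).
Proof.
move=> rT hu h2 xu hw.
rewrite (eigfun_eigvec (tw_lin hM om 1) _ hw) (ginv_homog hu h2 xu).
rewrite (linfunZ (tw_lin_vertex hM n w)) (linfunZ expL0_lin) (linfunZ (tw_lin hM u n)).
have [hn|hn] := pselect (is_int (n - r%:Q / T%:Q)); last first.
  by rewrite (tw_modes hM hT rT xu hn) (linfun0 expL0_lin) !scaler0.
have L0_uw := tw_L0_mode hV hM hT x_om rT xu hn hu h2 hw.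
rewrite (eigfun_eigvec (tw_lin hM om 1) _ L0_uw) scalerA.
have shift_int : is_int (a + r%:Q / T%:Q + (a - n - 1)).
  case: h2 => k hk; case: hn => l hl; exists (k - l - 1).
  by rewrite !intrB -hk -hl; ring.
congr (_ *: _); rewrite expi2piD expi2pi_rat -[RHS]mulr1.
by rewrite -(e2pii_is_int R shift_int) !e2piiD; ring.
Qed.

Lemma expL0_conj_eigvec v n w lam :
  L0 w = lam *: w -> expL0 (Ym (ginv v) n w) = Ym v n (expL0 w).
Proof.
move=> hw; have [T_gt0 xT _] := hT.
have ginv_lin := linfun_can g_lin gK ginvK.
pose intertwines v := expL0 (Ym (ginv v) n w) = Ym v n (expL0 w).
have intertwinesD v1 v2 : intertwines v1 -> intertwines v2 -> intertwines (v1 + v2).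
  rewrite /intertwines (linfunD ginv_lin) !(linfunD (tw_lin_vertex hM _ _)).
  by rewrite (linfunD expL0_lin) => -> ->.
have intertwines0 : intertwines 0.
  rewrite /intertwines (linfun0 ginv_lin) !(linfun0 (tw_lin_vertex hM _ _)).
  by rewrite (linfun0 expL0_lin).
have [s [hs ->]] := wt_decomp hV v.
rewrite big_seq; apply: (big_ind intertwines) => // y /hs[h2 hy].
rewrite -(sum_eigproj x T_gt0 y.2); apply: (big_ind intertwines) => // r _.
apply: (expL0_conj_homog n (ltn_ord r) _ h2 (eigprojP x_lin T_gt0 xT r y.2) hw).
apply: eigproj_closed hy.
- exact: (wtV0 hV).
- exact: (wtVZ hV).
- exact: (wtVD hV).
- by move=> z hz; rewrite x_def; apply: g_wt (sig_preserves_wtV hV hz h2) h2.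
Qed.

Lemma expL0_conj v n w : expL0 (Ym (ginv v) n w) = Ym v n (expL0 w).
Proof.
have [s [hs ->]] := tw_L0_decomp hM w.
rewrite !(linfun_sum (tw_lin hM _ _)) !(linfun_sum expL0_lin).
rewrite !(linfun_sum (tw_lin hM _ _)).
by apply: eq_big_seq => y /hs; apply: expL0_conj_eigvec.
Qed.

Lemma twist_iso_expL0 : mod_iso (twist_by ginv Ym) Ym.
Proof.
have expL0K := eigfunK (tw_lin hM om 1) (tw_L0_decomp hM).
exists expL0; split; first exact: expL0_lin.
  exists (eigfun L0 (fun l => expi2pi (- l))).
    by apply: expL0K => l; rewrite expi2piN.
  by apply: expL0K => l; rewrite mulrC expi2piN.
by move=> v n w; rewrite /twist_by expL0_conj.
Qed.
End ExpL0Isomorphism.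

Unset Implicit Arguments.

Theorem lemma6p1 (R : realType) (V : lmodType R[i])
    (Y : V -> int -> V -> V) (vac om : V) (sig : V -> V) (c : R[i]) :
  is_vosa Y vac om sig c ->
  (forall g ginv : V -> V, is_aut Y vac om g ginv -> finite_order g ->
     forall (M : lmodType R[i]) (Ym : V -> rat -> M -> M),
       twisted_module Y vac om sig (fun v => g (sig v)) Ym ->
       simple_module Ym ->
       mod_iso (twist_by ginv Ym) Ym) /\
  (forall (M : lmodType R[i]) (Ym : V -> rat -> M -> M),
     twisted_module Y vac om sig (fun v => v) Ym ->
     simple_module Ym ->
     mod_iso (twist_by sig Ym) Ym).
Proof.
move=> hV; split.
- move=> g ginv [g_lin gK ginvK [_ g_om] g_mode] [Tg [Tg_gt0 gTg _]] M Ym hM _.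
  have [T hT] : exists T, is_order (fun v => g (sig v)) T.
    apply: (order_exists (N := Tg.*2)); first by rewrite double_gt0.
    move=> v; rewrite (iter_aut_sig hV g_lin g_om g_mode).
    by rewrite (iter_double_involutive _ (sigK hV)) -addnn iterD !gTg.
  apply: (twist_iso_expL0 hV g_lin gK ginvK g_om _ (fun v => erefl) hM hT).
  by move=> a v hv _; apply: aut_preserves_wtV hv.
- move=> M Ym hM _.
  have hT : is_order (fun v : V => v) 1.
    by split=> // k /andP[k_gt0]; rewrite ltnS leqNgt k_gt0.
  have sigK := sigK hV.
  apply: (twist_iso_expL0 hV (sig_lin hV) sigK sigK (sig_om hV) _ _ hM hT).
    exact: (sig_preserves_wtV hV).
  by move=> v; rewrite sigK.
Qed.
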